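(* Let $\mathcal{F}=\{f_1,\dots,f_M\}$ be a frame of $\mathbb{R}^N$ partitioned into $K$ disjoint pools $\mathcal{F}_k=\{f_j\}_{j\in I_k}$, $k=1,\dots,K$, with $I_k\cap I_{k'}=\emptyset$ for $k\neq k'$, $\bigcup_k I_k=\{1,\dots,M\}$ and $|I_k|=d$ for all $k$. Let $P_2(x)=\big(\|\mathcal{F}_k^T x\|_2\big)_{k=1}^K$ be the $\ell_2$ pooling operator. Then for all $x,x'\in\mathbb{R}^N$, $$A_2\, d(x,x')\le \|P_2(x)-P_2(x')\|_2\le B_2\, d(x,x'),$$ where $d(x,x')=\min(\|x-x'\|,\|x+x'\|)$, $$A_2=\min_{\mathcal{F}'\in\mathcal{Q}_2}\ \min_{\Omega\subset\{1,\dots,M\}}\sqrt{\lambda_-^2(\mathcal{F}'_\Omega)+\lambda_-^2(\mathcal{F}'_{\Omega^c})},\qquad B_2=\lambda_+(\mathcal{F}),$$ and $\mathcal{Q}_2$ is the family of frames $\mathcal{F}'=(U_k\mathcal{F}_k)_{k\le K}$ obtained by choosing, for each $k$, an orthogonal matrix $U_k\in\mathbb{R}^{d\times d}$ ($U_k^TU_k=\mathrm{Id}$) and replacing the $d$ vectors of pool $k$ by the $d$ vectors obtained by applying $U_k$ to them (i.e. the columns of $\mathcal{F}_kU_k^T$, where $\mathcal{F}_k$ is viewed as the $N\times d$ matrix with columns $f_j$, $j\in I_k$), so that each pool is replaced by another frame of the same subspace with the same frame operator.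
   Context: For a finite family of vectors $G=\{g_i\}$ in $\mathbb{R}^N$, $\lambda_-(G)=\inf_{\|x\|=1}\big(\sum_i\langle x,g_i\rangle^2\big)^{1/2}$ and $\lambda_+(G)=\sup_{\|x\|=1}\big(\sum_i\langle x,g_i\rangle^2\big)^{1/2}$ denote its lower and upper frame bounds (in square-root form), with $\lambda_-(\emptyset)=0$. For $\Omega\subset\{1,\dots,M\}$, $\mathcal{F}'_\Omega$ is the subfamily of vectors of $\mathcal{F}'$ indexed by $\Omega$, and $\Omega^c$ is the complement of $\Omega$ in $\{1,\dots,M\}$. *)

From HB Require Import structures.
From mathcomp Require Import all_boot all_order all_algebra.
From mathcomp Require Import boolp classical_sets reals.
Set Implicit Arguments. Unset Strict Implicit. Unset Printing Implicit Defensive.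
Import Order.TTheory GRing.Theory Num.Theory.
Local Open Scope ring_scope.
Local Open Scope classical_set_scope.

Section Defs.
Variable R : realType.

Definition dotv {N : nat} (x y : 'rV[R]_N) : R := \sum_(i < N) x 0 i * y 0 i.
Definition normv {N : nat} (x : 'rV[R]_N) : R := Num.sqrt (dotv x x).

Definition frame_sum {N M : nat} (G : 'I_M -> 'rV[R]_N) (Om : {set 'I_M})
    (x : 'rV[R]_N) : R :=
  Num.sqrt (\sum_(i in Om) (dotv x (G i)) ^+ 2).

Definition lam_minus {N M : nat} (G : 'I_M -> 'rV[R]_N) (Om : {set 'I_M}) : R :=
  if #|Om| == 0%N then 0
  else inf [set frame_sum G Om x | x in [set x : 'rV[R]_N | normv x = 1]].

Definition lam_plus {N M : nat} (G : 'I_M -> 'rV[R]_N) (Om : {set 'I_M}) : R :=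
  sup [set frame_sum G Om x | x in [set x : 'rV[R]_N | normv x = 1]].

Definition is_frame {N M : nat} (G : 'I_M -> 'rV[R]_N) : Prop :=
  exists A B : R, 0 < A /\ forall x : 'rV[R]_N,
    A * dotv x x <= \sum_(i < M) (dotv x (G i)) ^+ 2 <= B * dotv x x.

Definition pool_enum {M K d : nat} (pool : 'I_M -> 'I_K) (k : 'I_K)
    (e : 'I_d -> 'I_M) : Prop :=
  injective e /\ forall j, pool j = k <-> exists a, e a = j.

(* F' belongs to Q_2: each pool k (as the N x d matrix F_k, columns in the
   order of an enumeration e k) is replaced by the columns of F_k (U_k)^T,
   U_k orthogonal. *)
Definition in_Q2 {N M K d : nat} (pool : 'I_M -> 'I_K)
    (F F' : 'I_M -> 'rV[R]_N) : Prop :=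
  exists (e : 'I_K -> 'I_d -> 'I_M) (U : 'I_K -> 'M[R]_d),
    (forall k, pool_enum pool k (e k)) /\
    (forall k, (U k)^T *m U k = 1%:M) /\
    (forall k a, F' (e k a) = \sum_(b < d) U k a b *: F (e k b)).

Definition P2 {N M K : nat} (pool : 'I_M -> 'I_K) (F : 'I_M -> 'rV[R]_N)
    (x : 'rV[R]_N) : 'rV[R]_K :=
  \row_(k < K) Num.sqrt (\sum_(j < M | pool j == k) (dotv x (F j)) ^+ 2).

Definition dist_pm {N : nat} (x x' : 'rV[R]_N) : R :=
  Num.min (normv (x - x')) (normv (x + x')).

Definition A2 {N M K : nat} (d : nat) (pool : 'I_M -> 'I_K)
    (F : 'I_M -> 'rV[R]_N) : R :=
  inf [set y : R | exists (F' : 'I_M -> 'rV[R]_N) (Om : {set 'I_M}),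
      @in_Q2 N M K d pool F F' /\
      y = Num.sqrt ((lam_minus F' Om) ^+ 2 + (lam_minus F' (~: Om)) ^+ 2)].
End Defs.

From HB Require Import structures.
From mathcomp Require Import all_boot all_order all_algebra.
From mathcomp Require Import boolp classical_sets reals.
From mathcomp Require Import ring lra.
Import Order.TTheory GRing.Theory Num.Theory.
Local Open Scope ring_scope.

(* Upper bound: in every pool the reverse triangle inequality gives
   |‖F_k^T x‖ - ‖F_k^T x'‖| <= ‖F_k^T (x ∓ x')‖; summing over the pools, the
   upper frame bound finishes.
   Lower bound: with a = F_k^T x, b = F_k^T x', A = ‖a‖, B = ‖b‖, a Householder
   reflection U_k sending B a - A b to the first axis makes B |U_k a| = A |U_k b|
   coordinatewise, hence (A - B)^2 = Σ_{j ∈ I_k} (|<x, f'_j>| - |<x', f'_j>|)^2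
   for the rotated frame F'.  Splitting the indices j by the sign of
   <x, f'_j><x', f'_j> turns the total into ‖F'_Ω^T (x - x')‖^2 +
   ‖F'_{Ω^c}^T (x + x')‖^2, which the lower frame bounds of F'_Ω and F'_{Ω^c}
   control by d(x, x'). *)

Section SumsOfSquares.
Context {R : realType} {I : finType}.
Implicit Types (P : pred I) (x y : I -> R).

Lemma sumsq_ge0 P x : 0 <= \sum_(i | P i) x i ^+ 2.
Proof. by apply: sumr_ge0 => i _; rewrite sqr_ge0. Qed.

Lemma sumsq_eq0 P x : \sum_(i | P i) x i ^+ 2 = 0 -> forall i, P i -> x i = 0.
Proof.
move=> /psumr_eq0P x0 i Pi; apply/eqP; rewrite -sqrf_eq0; apply/eqP/x0 => // j _.
exact: sqr_ge0.
Qed.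

Lemma sumsqZ P c x : \sum_(i | P i) (c * x i) ^+ 2 = c ^+ 2 * \sum_(i | P i) x i ^+ 2.
Proof. by rewrite mulr_sumr; apply: eq_bigr => i _; rewrite exprMn. Qed.

Lemma sumsqB P x y : \sum_(i | P i) (x i - y i) ^+ 2 =
  \sum_(i | P i) x i ^+ 2 + \sum_(i | P i) y i ^+ 2 - 2 * \sum_(i | P i) x i * y i.
Proof.
rewrite mulr_sumr -big_split -sumrB; apply: eq_bigr => i _ /=.
by rewrite sqrrB mulr_natl mulr2n; ring.
Qed.

Lemma Cauchy_Schwarz P x y : (\sum_(i | P i) x i * y i) ^+ 2 <=
  (\sum_(i | P i) x i ^+ 2) * (\sum_(i | P i) y i ^+ 2).
Proof.
set A := \sum_(i | P i) x i ^+ 2; set B := \sum_(i | P i) y i ^+ 2.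
set S := \sum_(i | P i) x i * y i.
have [B0|B0] := eqVneq B 0.
  rewrite B0 mulr0 /S big1 ?expr0n // => i Pi.
  by rewrite (sumsq_eq0 _ _ B0) ?mulr0.
have Bp : 0 < B by rewrite lt_def B0 sumsq_ge0.
have := sumsq_ge0 P (fun i => B * x i - S * y i).
rewrite sumsqB !sumsqZ -/A -/B.
have -> : \sum_(i | P i) B * x i * (S * y i) = B * S * S.
  by rewrite mulr_sumr; apply: eq_bigr => i _; ring.
have -> : B ^+ 2 * A + S ^+ 2 * B - 2 * (B * S * S) = B * (A * B - S ^+ 2) by ring.
by rewrite pmulr_rge0 // subr_ge0 mulrC.
Qed.

Lemma Cauchy_Schwarz_sqrt P x y : \sum_(i | P i) x i * y i <=
  Num.sqrt (\sum_(i | P i) x i ^+ 2) * Num.sqrt (\sum_(i | P i) y i ^+ 2).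
Proof.
rewrite -sqrtrM ?sumsq_ge0 // (le_trans (ler_norm _)) // -sqrtr_sqr.
by rewrite ler_sqrt ?mulr_ge0 ?sumsq_ge0 // Cauchy_Schwarz.
Qed.

Lemma sqrt_sumsqB P x y :
  (Num.sqrt (\sum_(i | P i) x i ^+ 2) - Num.sqrt (\sum_(i | P i) y i ^+ 2)) ^+ 2
  <= \sum_(i | P i) (x i - y i) ^+ 2.
Proof.
have := Cauchy_Schwarz_sqrt P x y.
rewrite sumsqB sqrrB !sqr_sqrtr ?sumsq_ge0 // mulr2n; lra.
Qed.

Lemma sqr_eq_of_sumsq_eq x y i0 : \sum_i x i ^+ 2 = \sum_i y i ^+ 2 ->
  (forall i, i != i0 -> x i = y i) -> forall i, x i ^+ 2 = y i ^+ 2.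
Proof.
move=> Exy xy i; have [->|/xy -> //] := eqVneq i i0.
move: Exy; rewrite (bigD1 i0) // [RHS](bigD1 i0) //=.
by rewrite (eq_bigr (fun i => y i ^+ 2)) => [/addIr|j /xy ->].
Qed.

Lemma sumsq_normB_aligned x y :
  let A := Num.sqrt (\sum_i x i ^+ 2) in let B := Num.sqrt (\sum_i y i ^+ 2) in
  (forall i, (B * x i) ^+ 2 = (A * y i) ^+ 2) ->
  \sum_i (`|x i| - `|y i|) ^+ 2 = (A - B) ^+ 2.
Proof.
move=> A B xy.
have A0 : 0 <= A := sqrtr_ge0 _.
have B0 : 0 <= B := sqrtr_ge0 _.
have normK z : `|z| ^+ 2 = z ^+ 2 :> R by rewrite real_normK ?num_real.
set S := \sum_i `|x i| * `|y i|.
have S0 : 0 <= S by apply: sumr_ge0 => i _; rewrite mulr_ge0.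
have AS : \sum_i x i ^+ 2 = A ^+ 2 by rewrite sqr_sqrtr ?sumsq_ge0.
have BS : \sum_i y i ^+ 2 = B ^+ 2 by rewrite sqr_sqrtr ?sumsq_ge0.
have AB_S : A * B * S = B ^+ 2 * A ^+ 2.
  rewrite -AS -sumsqZ mulr_sumr; apply: eq_bigr => i _.
  have Bxy : `|B * x i| = `|A * y i| by rewrite -!sqrtr_sqr xy.
  by rewrite -normK expr2 {2}Bxy !normrM (ger0_norm A0) (ger0_norm B0); ring.
have S_AB : S = A * B.
  have [AB0|AB0] := eqVneq (A * B) 0; last by apply: (mulfI AB0); rewrite AB_S; ring.
  rewrite AB0 /S big1 // => i _.
  move/eqP: AB0; rewrite mulf_eq0 => /orP[/eqP A_0|/eqP B_0].
    by rewrite (@sumsq_eq0 predT x) ?normr0 ?mul0r // AS A_0 expr0n.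
  by rewrite (@sumsq_eq0 predT y) ?normr0 ?mulr0 // BS B_0 expr0n.
rewrite (sumsqB predT) -/S S_AB (eq_bigr _ (fun i _ => normK (x i))).
by rewrite (eq_bigr _ (fun i _ => normK (y i))) AS BS; ring.
Qed.

Lemma sqr_normrB (u v : R) :
  (`|u| - `|v|) ^+ 2 = if 0 <= u * v then (u - v) ^+ 2 else (u + v) ^+ 2.
Proof.
have -> : (`|u| - `|v|) ^+ 2 = u ^+ 2 + v ^+ 2 - 2 * `|u * v|.
  by rewrite normrM -(real_normK (num_real u)) -(real_normK (num_real v)); ring.
by case: ifP => uv; [rewrite ger0_norm // | rewrite ltr0_norm ?ltNge ?uv //]; ring.
Qed.

End SumsOfSquares.

Section Householder.
Context {R : realType} {n : nat}.
Implicit Types (h u v w : 'cV[R]_n) (U : 'M[R]_n).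

Lemma trmx_mul00 u v : (u^T *m v) 0 0 = \sum_i u i 0 * v i 0.
Proof. by rewrite mxE; apply: eq_bigr => i _; rewrite mxE. Qed.

Lemma sumsq_orthogonal U v : U^T *m U = 1%:M ->
  \sum_i (U *m v) i 0 ^+ 2 = \sum_i v i 0 ^+ 2.
Proof.
move=> UU; have sq w : \sum_i w i 0 ^+ 2 = (w^T *m w) 0 0.
  by rewrite trmx_mul00; apply: eq_bigr => i _; rewrite expr2.
by rewrite !sq trmx_mul -mulmxA (mulmxA U^T) UU mul1mx.
Qed.

(* For h = 0 the coefficient is 2 / 0 = 0, so [householder 0 = 1]. *)
Definition householder h : 'M[R]_n := 1%:M - (2 / (h^T *m h) 0 0) *: (h *m h^T).

Lemma householder_sym h : (householder h)^T = householder h.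
Proof. by apply/matrixP => i j; rewrite !mxE !big_ord1 !mxE eq_sym; ring. Qed.

Lemma householder_orthogonal h : (householder h)^T *m householder h = 1%:M.
Proof.
rewrite householder_sym /householder.
set s := (h^T *m h) 0 0; set c := 2 / s; set P := h *m h^T.
have PP : P *m P = s *: P.
  by rewrite /P mulmxA -(mulmxA h) [h^T *m h]mx11_scalar mul_mx_scalar -scalemxAl.
have cc : c * c * s = c + c.
  rewrite /c; have [->|s0] := eqVneq s 0; first by rewrite invr0 !mulr0 addr0.
  by field.
rewrite mulmxBl mul1mx mulmxBr mulmx1 -scalemxAl -scalemxAr PP !scalerA cc scalerDl.
by rewrite opprB addrA addrA subrK addrK.
Qed.

Lemma householder_reflect h w : (h^T *m h) 0 0 = 2 * (h^T *m w) 0 0 ->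
  householder h *m w = w - h.
Proof.
move=> hhw; rewrite /householder mulmxBl mul1mx -scalemxAl -mulmxA.
rewrite [h^T *m w]mx11_scalar mul_mx_scalar scalerA hhw.
have [t0|t0] := eqVneq ((h^T *m w) 0 0) 0; last first.
  by rewrite [_ / _ * _](_ : _ = 1) ?scale1r //; field.
suff -> : h = 0 by rewrite !scaler0.
have : (h^T *m h) 0 0 = 0 by rewrite hhw t0 mulr0.
rewrite trmx_mul00 => h0.
apply/matrixP => i j; rewrite ord1 mxE (@sumsq_eq0 _ _ predT (h ^~ 0)) //.
Qed.

Lemma householder_swap u v : \sum_i u i 0 ^+ 2 = \sum_i v i 0 ^+ 2 ->
  householder (u - v) *m u = v.
Proof.
move=> uv; rewrite householder_reflect; first by rewrite opprB addrC subrK.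
rewrite !trmx_mul00.
have -> : \sum_i (u - v) i 0 * (u - v) i 0 = \sum_i (u i 0 - v i 0) ^+ 2.
  by apply: eq_bigr => i _; rewrite !mxE expr2.
have -> : \sum_i (u - v) i 0 * u i 0 = \sum_i u i 0 ^+ 2 - \sum_i v i 0 * u i 0.
  by rewrite -sumrB; apply: eq_bigr => i _; rewrite !mxE mulrBl expr2.
rewrite (sumsqB predT) -uv.
have -> : \sum_(i | predT i) u i 0 * v i 0 = \sum_i v i 0 * u i 0.
  by apply: eq_bigr => i _; rewrite mulrC.
by ring.
Qed.

End Householder.

Section Alignment.
Context {R : realType}.

Lemma exists_orthogonal_axis {n} (w : 'cV[R]_n.+1) :
  exists2 U : 'M[R]_n.+1, U^T *m U = 1%:M & forall i, i != 0 -> (U *m w) i 0 = 0.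
Proof.
set v : 'cV[R]_n.+1 := Num.sqrt (\sum_i w i 0 ^+ 2) *: delta_mx 0 0.
exists (householder (w - v)); first exact: householder_orthogonal.
move=> i i0; rewrite householder_swap; first by rewrite /v !mxE (negbTE i0) mulr0.
rewrite [RHS]big_ord_recl [X in _ = _ + X]big1 => [|j _].
  by rewrite /v !mxE !eqxx mulr1 addr0 sqr_sqrtr // sumsq_ge0.
by rewrite /v !mxE mulr0 expr0n.
Qed.

Lemma exists_orthogonal_aligned {n} (a b : 'cV[R]_n) :
  let A := Num.sqrt (\sum_i a i 0 ^+ 2) in let B := Num.sqrt (\sum_i b i 0 ^+ 2) in
  exists U : 'M[R]_n, U^T *m U = 1%:M /\
    forall i, (B * (U *m a) i 0) ^+ 2 = (A * (U *m b) i 0) ^+ 2.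
Proof.
move=> A B; case: n a b @A @B => [|n] a b A B.
  by exists 1%:M; split=> [|[]//]; rewrite trmx1 mulmx1.
have [U UU Uw] := exists_orthogonal_axis (B *: a - A *: b).
(* Off the first axis B (U a)_i = A (U b)_i; as both sides have sum of
   squares A^2 B^2, the first coordinates agree up to sign as well. *)
exists U; split=> //; apply: (@sqr_eq_of_sumsq_eq _ _ _ _ 0).
  rewrite !(sumsqZ predT) !sumsq_orthogonal // !sqr_sqrtr ?sumsq_ge0 //.
  by rewrite /A /B mulrC.
move=> i /Uw; rewrite mulmxBr -!scalemxAr !mxE => /eqP.
by rewrite subr_eq0 => /eqP.
Qed.

End Alignment.

Section Frames.
Context {R : realType} {N : nat}.
Implicit Types (x y z f : 'rV[R]_N).

Lemma dotvC x y : dotv x y = dotv y x.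
Proof. by apply: eq_bigr => i _; rewrite mulrC. Qed.

Lemma dotvDl x y f : dotv (x + y) f = dotv x f + dotv y f.
Proof. by rewrite /dotv -big_split; apply: eq_bigr => i _; rewrite mxE mulrDl. Qed.

Lemma dotvZl c x f : dotv (c *: x) f = c * dotv x f.
Proof. by rewrite /dotv mulr_sumr; apply: eq_bigr => i _; rewrite mxE mulrA. Qed.

Lemma dotvNl x f : dotv (- x) f = - dotv x f.
Proof. by rewrite -scaleN1r dotvZl mulN1r. Qed.

Lemma dotvBl x y f : dotv (x - y) f = dotv x f - dotv y f.
Proof. by rewrite dotvDl dotvNl. Qed.

Lemma dotv_sumr d x (c : 'I_d -> R) (g : 'I_d -> 'rV[R]_N) :
  dotv x (\sum_b c b *: g b) = \sum_b c b * dotv x (g b).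
Proof.
rewrite /dotv; under eq_bigr do rewrite summxE mulr_sumr.
rewrite exchange_big; apply: eq_bigr => b _; rewrite mulr_sumr.
by apply: eq_bigr => i _; rewrite mxE; ring.
Qed.

Lemma dotvv x : dotv x x = \sum_i x 0 i ^+ 2.
Proof. by apply: eq_bigr => i _; rewrite expr2. Qed.

Lemma normv_ge0 x : 0 <= normv x.
Proof. exact: sqrtr_ge0. Qed.

Lemma normv_sqr x : normv x ^+ 2 = \sum_i x 0 i ^+ 2.
Proof. by rewrite sqr_sqrtr dotvv // (sumsq_ge0 predT). Qed.

Lemma normvZ c x : normv (c *: x) = `|c| * normv x.
Proof. by rewrite /normv dotvZl dotvC dotvZl mulrA -expr2 sqrtrM ?sqr_ge0 // sqrtr_sqr. Qed.

Lemma normv_eq0_dotv x f : normv x = 0 -> dotv x f = 0.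
Proof.
move=> /eqP; rewrite sqrtr_eq0 le_eqVlt ltNge dotvv (sumsq_ge0 predT) orbF => /eqP x0.
by rewrite /dotv big1 // => i _; rewrite (sumsq_eq0 _ _ x0) ?mul0r.
Qed.

Context {M : nat}.
Implicit Types (G : 'I_M -> 'rV[R]_N) (Om : {set 'I_M}).

Lemma frame_sum_sqr G Om z : frame_sum G Om z ^+ 2 = \sum_(i in Om) dotv z (G i) ^+ 2.
Proof. by rewrite sqr_sqrtr // sumsq_ge0. Qed.

Lemma frame_sumZ G Om c z : frame_sum G Om (c *: z) = `|c| * frame_sum G Om z.
Proof.
rewrite /frame_sum; under eq_bigr do rewrite dotvZl.
by rewrite sumsqZ sqrtrM ?sqr_ge0 // sqrtr_sqr.
Qed.

Lemma frame_sum_normalize G Om z : normv z != 0 ->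
  frame_sum G Om z = normv z * frame_sum G Om ((normv z)^-1 *: z) /\
  normv ((normv z)^-1 *: z) = 1.
Proof.
move=> z0; rewrite frame_sumZ normvZ ger0_norm ?invr_ge0 ?normv_ge0 //.
by rewrite mulrA divff // mul1r mulVf.
Qed.

Lemma frame_sum_le_lam_plus G Om z : frame_sum G Om z <= lam_plus G Om * normv z.
Proof.
have [z0|z0] := eqVneq (normv z) 0.
  by rewrite /frame_sum big1 ?sqrtr0 ?z0 ?mulr0 // => i _; rewrite normv_eq0_dotv ?expr0n.
have [-> z1] := frame_sum_normalize G Om _ z0.
rewrite mulrC ler_pM2r ?lt_def ?z0 ?normv_ge0 //.
apply: ub_le_sup; last by exists ((normv z)^-1 *: z).
exists (Num.sqrt (\sum_(i in Om) dotv (G i) (G i))) => _ [y /= y1 <-].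
rewrite ler_sqrt; last by apply: sumr_ge0 => i _; rewrite dotvv (sumsq_ge0 predT).
apply: ler_sum => i _; rewrite dotvv.
have := Cauchy_Schwarz predT (fun j => y 0 j) (fun j => G i 0 j).
by rewrite /= -normv_sqr y1 expr1n mul1r.
Qed.

Lemma lam_minus_ge0 G Om : 0 <= lam_minus G Om.
Proof.
rewrite /lam_minus; case: ifP => // _; set E := (X in inf X).
have [->|/set0P [e Ee]] := eqVneq E set0; first by rewrite inf0.
by apply: lb_le_inf => [|_ [y _ <-]]; [exists e | exact: sqrtr_ge0].
Qed.

Lemma lam_minus_le_frame_sum G Om z : lam_minus G Om * normv z <= frame_sum G Om z.
Proof.
have [z0|z0] := eqVneq (normv z) 0; first by rewrite z0 mulr0 sqrtr_ge0.
rewrite /lam_minus; case: ifP => _; first by rewrite mul0r sqrtr_ge0.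
have [-> z1] := frame_sum_normalize G Om _ z0.
rewrite mulrC ler_pM2l ?lt_def ?z0 ?normv_ge0 //.
apply: ge_inf; last by exists ((normv z)^-1 *: z).
by exists 0 => _ [y _ <-]; exact: sqrtr_ge0.
Qed.

Lemma lam_minus_mul_le_frame_sum G Om z r :
  0 <= r <= normv z -> lam_minus G Om * r <= frame_sum G Om z.
Proof.
case/andP=> r0 rz; apply: le_trans (lam_minus_le_frame_sum G Om z).
by rewrite ler_wpM2l ?lam_minus_ge0.
Qed.

Lemma dist_pm_ge0 x x' : 0 <= dist_pm x x'.
Proof. by rewrite /dist_pm le_min !normv_ge0. Qed.

Lemma lam_minus_sign_split G x x' : exists Om,
  (lam_minus G Om ^+ 2 + lam_minus G (~: Om) ^+ 2) * dist_pm x x' ^+ 2 <=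
  \sum_j (`|dotv x (G j)| - `|dotv x' (G j)|) ^+ 2.
Proof.
pose Om := [set j | 0 <= dotv x (G j) * dotv x' (G j)]; exists Om.
rewrite (bigID (mem Om)) /= mulrDl -!exprMn.
have le_frame_sum Om' z : normv z = normv (x - x') \/ normv z = normv (x + x') ->
    (lam_minus G Om' * dist_pm x x') ^+ 2 <= frame_sum G Om' z ^+ 2.
  move=> zx; rewrite ler_pXn2r ?nnegrE ?mulr_ge0 ?lam_minus_ge0 ?dist_pm_ge0 ?sqrtr_ge0 //.
  apply: lam_minus_mul_le_frame_sum; rewrite dist_pm_ge0 /dist_pm.
  by case: zx => ->; rewrite ge_min lexx ?orbT.
have -> : \sum_(j | j \in Om) (`|dotv x (G j)| - `|dotv x' (G j)|) ^+ 2 =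
    frame_sum G Om (x - x') ^+ 2.
  by rewrite frame_sum_sqr; apply: eq_bigr => j; rewrite inE sqr_normrB dotvBl => ->.
have -> : \sum_(j | j \notin Om) (`|dotv x (G j)| - `|dotv x' (G j)|) ^+ 2 =
    frame_sum G (~: Om) (x + x') ^+ 2.
  rewrite frame_sum_sqr; apply: eq_big => [j|j]; first by rewrite !inE.
  by rewrite inE sqr_normrB dotvDl => /negbTE ->.
by apply: lerD; apply: le_frame_sum; [left | right].
Qed.

End Frames.

Section Pools.
Context {M K d : nat} (pool : 'I_M -> 'I_K).

Lemma exists_pool_enum k :
  #|[set j | pool j == k]| = d -> exists e : 'I_d -> 'I_M, pool_enum pool k e.
Proof.
move=> card_k; exists (fun b => enum_val (cast_ord (esym card_k) b)); split.
  by move=> b1 b2 /enum_val_inj /cast_ord_inj.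
move=> j; split=> [pj|[b <-]].
  have kj : j \in [set j | pool j == k] by rewrite inE pj.
  by exists (cast_ord card_k (enum_rank_in kj j)); rewrite cast_ordK enum_rankK_in.
by have := enum_valP (cast_ord (esym card_k) b); rewrite inE => /eqP.
Qed.

Lemma sum_pool_enum (V : nmodType) k (e : 'I_d -> 'I_M) (g : 'I_M -> V) :
  pool_enum pool k e -> \sum_(j | pool j == k) g j = \sum_b g (e b).
Proof.
move=> [e_inj e_k].
rewrite (eq_bigl (fun j => j \in [set j | pool j == k])) => [|j]; last by rewrite inE.
have -> : [set j | pool j == k] = [set e b | b : 'I_d].
  apply/setP => j; rewrite inE; apply/eqP/imsetP => [/e_k [b <-]|[b _ ->]].
    by exists b.
  by apply/e_k; exists b.
by rewrite big_imset //; move=> ? ? _ _; apply: e_inj.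
Qed.

Lemma pool_enum_extend (e : 'I_K -> 'I_d -> 'I_M) {T : Type} (g : 'I_K -> 'I_d -> T) :
  (forall k, pool_enum pool k (e k)) -> exists f : 'I_M -> T, forall k a, f (e k a) = g k a.
Proof.
move=> e_pool; have [r e_r] : {r : 'I_M -> 'I_d & forall j, e (pool j) (r j) = j}.
  by apply: (@choice _ _ (fun j a => e (pool j) a = j)) => j; apply/(e_pool (pool j)).2.
have pool_e k a : pool (e k a) = k by apply/(e_pool k).2; exists a.
exists (fun j => g (pool j) (r j)) => k a; rewrite pool_e; congr (g k _).
by apply: (e_pool k).1; rewrite -[RHS]e_r pool_e.
Qed.

End Pools.

Section Pooling.
Context {R : realType} {N M K : nat}.
Variables (F : 'I_M -> 'rV[R]_N) (pool : 'I_M -> 'I_K).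

Lemma P2N x : P2 pool F (- x) = P2 pool F x.
Proof.
apply/matrixP => i k; rewrite !mxE; congr Num.sqrt.
by apply: eq_bigr => j _; rewrite dotvNl sqrrN.
Qed.

Lemma normv_P2B_sqr x x' : normv (P2 pool F x - P2 pool F x') ^+ 2 =
  \sum_k (P2 pool F x 0 k - P2 pool F x' 0 k) ^+ 2.
Proof. by rewrite normv_sqr; apply: eq_bigr => k _; rewrite !mxE. Qed.

Lemma normv_P2B_le_frame_sum x x' :
  normv (P2 pool F x - P2 pool F x') <= frame_sum F [set: 'I_M] (x - x').
Proof.
rewrite -ler_sqr ?nnegrE ?normv_ge0 ?sqrtr_ge0 // normv_P2B_sqr frame_sum_sqr.
rewrite (partition_big pool predT) //; apply: ler_sum => k _; rewrite !mxE.
rewrite (eq_bigl (fun j => pool j == k)) => [|j]; last by rewrite inE.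
under [X in _ <= X]eq_bigr do rewrite dotvBl.
exact: sqrt_sumsqB.
Qed.

Lemma P2_lipschitz x x' :
  normv (P2 pool F x - P2 pool F x') <= lam_plus F [set: 'I_M] * normv (x - x').
Proof. exact: le_trans (normv_P2B_le_frame_sum x x') (frame_sum_le_lam_plus F _ _). Qed.

Lemma exists_Q2_aligned {d} x x' : (forall k, #|[set j | pool j == k]| = d) ->
  exists2 F', @in_Q2 R N M K d pool F F' &
    \sum_j (`|dotv x (F' j)| - `|dotv x' (F' j)|) ^+ 2 =
    normv (P2 pool F x - P2 pool F x') ^+ 2.
Proof.
move=> card_pool.
have [e e_pool] := choice (fun k => exists_pool_enum pool k (card_pool k)).
pose al k : 'cV[R]_d := \col_b dotv x (F (e k b)).
pose be k : 'cV[R]_d := \col_b dotv x' (F (e k b)).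
have [U U_k] := choice (fun k => exists_orthogonal_aligned (al k) (be k)).
have [F' F'_e] := pool_enum_extend pool e (fun k a => \sum_b U k a b *: F (e k b)) e_pool.
exists F'; first by exists e, U; split=> //; split=> // k; case: (U_k k).
rewrite normv_P2B_sqr (partition_big pool predT) //=; apply: eq_bigr => k _.
have [U_orth U_al] := U_k k.
have Ux y a : (U k *m \col_b dotv y (F (e k b))) a 0 = dotv y (F' (e k a)).
  by rewrite F'_e dotv_sumr mxE; apply: eq_bigr => b _; rewrite mxE.
have P2U y :
    P2 pool F y 0 k = Num.sqrt (\sum_a (U k *m \col_b dotv y (F (e k b))) a 0 ^+ 2).
  rewrite sumsq_orthogonal // mxE (sum_pool_enum pool _ _ _ _ (e_pool k)).
  by congr Num.sqrt; apply: eq_bigr => b _; rewrite mxE.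
rewrite !P2U -sumsq_normB_aligned; last by move=> a; rewrite !sumsq_orthogonal.
by rewrite (sum_pool_enum pool _ _ _ _ (e_pool k)); apply: eq_bigr => a _; rewrite !Ux.
Qed.

Lemma A2_le_sqrt {d F'} Om : @in_Q2 R N M K d pool F F' ->
  A2 d pool F <= Num.sqrt (lam_minus F' Om ^+ 2 + lam_minus F' (~: Om) ^+ 2).
Proof.
move=> F'_Q2; apply: ge_inf; last by exists F', Om.
by exists 0 => _ [? [? [_ ->]]]; exact: sqrtr_ge0.
Qed.

Lemma P2_lower d x x' : (forall k, #|[set j | pool j == k]| = d) ->
  A2 d pool F * dist_pm x x' <= normv (P2 pool F x - P2 pool F x').
Proof.
move=> card_pool; have [F' F'_Q2 F'_sum] := exists_Q2_aligned x x' card_pool.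
have [Om Om_le] := lam_minus_sign_split F' x x'.
apply: le_trans (ler_wpM2r (dist_pm_ge0 x x') (A2_le_sqrt Om F'_Q2)) _.
rewrite -ler_sqr ?nnegrE ?mulr_ge0 ?sqrtr_ge0 ?dist_pm_ge0 ?normv_ge0 //.
by rewrite exprMn sqr_sqrtr ?addr_ge0 ?sqr_ge0 // -F'_sum.
Qed.

End Pooling.

Theorem proposition3 (R : realType) (N M K d : nat)
    (F : 'I_M -> 'rV[R]_N) (pool : 'I_M -> 'I_K)
    (hframe : is_frame F)
    (hpool : forall k : 'I_K, #|[set j | pool j == k]| = d) :
  forall x x' : 'rV[R]_N,
    A2 d pool F * dist_pm x x' <= normv (P2 pool F x - P2 pool F x') /\
    normv (P2 pool F x - P2 pool F x') <= lam_plus F [set: 'I_M] * dist_pm x x'.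
Proof.
move=> x x'; split; first exact: P2_lower.
rewrite /dist_pm minEle; case: ifP => _; first exact: P2_lipschitz.
by have := P2_lipschitz F pool x (- x'); rewrite P2N opprK.
Qed.
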